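(* Let $n \ge 2$ and let $K_n$ be the complete graph on $n$ vertices (the interaction graph of a dense one-body Fermionic Hamiltonian on $n$ sites). Then: (i) $d_{\mathrm{swap}}(K_n) = n-2$, and there exists a swap network for $K_n$ with swap depth $n-2$ and $n$ interaction layers; (ii) if $n$ is odd, every swap network for $K_n$ has at least $n$ interaction layers (so $n$ interaction layers is optimal); (iii) if $n$ is even and $n > 2$, the minimum number of interaction layers over all swap networks for $K_n$ is $n-1$, and no swap network for $K_n$ has simultaneously swap depth $n-2$ and $n-1$ interaction layers.
   Context: Linear-connectivity swap network model. Let $G=(V,E)$ be a finite graph with $|V|=n$. Qubits occupy positions $0,1,\ldots,n-1$ on a line. A configuration is a bijection $\pi: V \to \{0,\ldots,n-1\}$. A swap layer is a set of pairwise disjoint pairs of adjacent positions $\{i,i+1\}$; applying it to a configuration exchanges the vertices located at the two positions of each pair. A swap network for $G$ consists of an initial configuration $\pi_0$ (chosen freely) and a sequence of swap layers $L_1,\ldots,L_d$, producing configurations $\pi_0,\pi_1,\ldots,\pi_d$, together with a sequence of interaction layers, each attached to some configuration $\pi_t$ (several interaction layers may be attached to the same configuration); an interaction layer at $\pi_t$ is a set of pairwise disjoint edges $\{v,w\}\in E$ with $|\pi_t(v)-\pi_t(w)|=1$ (so each vertex takes part in at most one interaction per layer). It is required that every edge of $G$ belongs to some interaction layer. The swap depth of the network is $d$ and its interaction depth is the number of interaction layers. $d_{\mathrm{swap}}(G)$ denotes the minimum swap depth over all swap networks for $G$. *)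

From mathcomp Require Import all_boot.
Set Implicit Arguments. Unset Strict Implicit. Unset Printing Implicit Defensive.

(* A finite graph G = (V, E): V a finType, E : rel V (an edge {v,w} is present
   iff E v w; for K_n, E := fun v w => v != w).  Positions are 0..#|V|-1 (nat). *)

Definition is_config (V : finType) (pi : V -> nat) : Prop :=
  injective pi /\ (forall v, pi v < #|V|).

(* A swap layer is represented by the list of left endpoints i of its pairs
   {i, i+1}; pairs must be pairwise disjoint and inside the line. *)
Definition valid_swap_layer (n : nat) (L : seq nat) : Prop :=
  (forall i, i \in L -> i.+1 < n) /\
  (forall i j, i \in L -> j \in L -> i != j -> i.+1 < j \/ j.+1 < i).

Definition swap_pos (L : seq nat) (p : nat) : nat :=
  if p \in L then p.+1
  else if (0 < p) && (p.-1 \in L) then p.-1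
  else p.

Definition apply_layer (V : Type) (L : seq nat) (pi : V -> nat) : V -> nat :=
  fun v => swap_pos L (pi v).

Definition config_at (V : Type) (pi0 : V -> nat) (Ls : seq (seq nat)) (t : nat)
  : V -> nat :=
  foldl (fun pi L => apply_layer L pi) pi0 (take t Ls).

Definition valid_interaction_layer (V : finType) (E : rel V) (pi : V -> nat)
    (I : seq (V * V)) : Prop :=
  (forall p, p \in I -> E p.1 p.2 /\ (pi p.1 = (pi p.2).+1 \/ pi p.2 = (pi p.1).+1)) /\
  uniq (flatten [seq [:: p.1; p.2] | p <- I]).

(* A swap network: initial configuration, swap layers L_1..L_d, and interaction
   layers, each attached to a time t (meaning configuration pi_t, 0 <= t <= d). *)
Record swap_network (V : Type) := SwapNetwork {
  sn_init : V -> nat;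
  sn_swaps : seq (seq nat);
  sn_inter : seq (nat * seq (V * V))
}.

Definition swap_depth (V : Type) (N : swap_network V) : nat := size (sn_swaps N).
Definition interaction_depth (V : Type) (N : swap_network V) : nat :=
  size (sn_inter N).

Definition is_swap_network (V : finType) (E : rel V) (N : swap_network V) : Prop :=
  is_config (sn_init N) /\
  (forall L, L \in sn_swaps N -> valid_swap_layer #|V| L) /\
  (forall tI, tI \in sn_inter N ->
      tI.1 <= size (sn_swaps N) /\
      valid_interaction_layer E (config_at (sn_init N) (sn_swaps N) tI.1) tI.2) /\
  (forall v w, E v w ->
      exists2 tI, tI \in sn_inter N & ((v, w) \in tI.2) || ((w, v) \in tI.2)).

Definition dswap_is (V : finType) (E : rel V) (d : nat) : Prop :=
  (exists N, is_swap_network E N /\ swap_depth N = d) /\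
  (forall N, is_swap_network E N -> d <= swap_depth N).

Definition K_edge (n : nat) : rel 'I_n := fun v w => v != w.

From mathcomp Require Import all_boot zify.
Set Implicit Arguments. Unset Strict Implicit. Unset Printing Implicit Defensive.

(* Every vertex of K_n has n - 1 edges and takes part in at most one of them per
   interaction layer, so there are at least n - 1 layers; if there are exactly
   n - 1, every layer is a perfect matching (impossible for odd n) and every edge
   is used exactly once.  Every other vertex must at some time stand immediately to
   the right of the vertex starting at position 0, and only one can stand there
   at a time, so the swap depth is at least n - 2.  If both bounds are attained,
   two layers at the same time would both contain the edge between the vertex at
   position 0 and its only neighbour, so the n - 1 layers sit at the n - 1 times
   0..n-2; then no swap can touch an end of the line (the two exchanged vertices
   would meet in two consecutive layers), and the two end vertices never meet.
   Conversely, the odd-even transposition network makes any two of n vertices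
   adjacent within n - 2 steps, and grouping the pairs {u, v} by u + v mod n gives
   n interaction layers.  For even n, vertex n - 1 is parked at position 0 while
   the odd number n - 1 of other vertices run the odd-even network on the
   remaining positions; n - 1 layers taken at even times then suffice. *)

Lemma config_at0 (V : Type) (pi : V -> nat) Ls : config_at pi Ls 0 = pi.
Proof. by rewrite /config_at take0. Qed.

Lemma config_atS (V : Type) (pi : V -> nat) Ls t : t < size Ls ->
  config_at pi Ls t.+1 = apply_layer (nth [::] Ls t) (config_at pi Ls t).
Proof. by move=> ht; rewrite /config_at (take_nth [::] ht) -cats1 foldl_cat. Qed.

Lemma swap_pos_bounds L p : swap_pos L p <= p.+1 /\ p <= (swap_pos L p).+1.
Proof. by rewrite /swap_pos; case: ifP => _; [|case: ifP => /=]; lia. Qed.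

Lemma swap_posK L :
  (forall i j, i \in L -> j \in L -> i != j -> i.+1 < j \/ j.+1 < i) ->
  involutive (swap_pos L).
Proof.
move=> disj p; rewrite /swap_pos; case pL: (p \in L).
  have -> : (p.+1 \in L) = false.
    by apply/negP=> p1L; have := disj _ _ pL p1L; rewrite neq_ltn ltnSn; lia.
  by rewrite /= pL.
case p1L: ((0 < p) && (p.-1 \in L)); last by rewrite pL p1L.
by case/andP: p1L => p_gt0 ->; rewrite prednK.
Qed.

Lemma swap_pos_lt L n p : (forall i, i \in L -> i.+1 < n) -> p < n -> swap_pos L p < n.
Proof. by move=> inL; rewrite /swap_pos; case: ifP => [/inL //|_]; case: ifP => _; lia. Qed.

Lemma is_config_at (V : finType) (pi : V -> nat) Ls t :
  is_config pi -> (forall L, L \in Ls -> valid_swap_layer #|V| L) ->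
  is_config (config_at pi Ls t).
Proof.
move=> [inj0 lt0] valid; elim: t => [|t [injt ltt]]; first by rewrite config_at0.
have [lt_t_size | ge_t_size] := ltnP t (size Ls).
  have [inL disj] := valid _ (mem_nth [::] lt_t_size).
  rewrite config_atS //; split; last by move=> v; apply: swap_pos_lt.
  by move=> x y /(inv_inj (swap_posK disj)) /injt.
by rewrite /config_at !take_oversize ?(leq_trans ge_t_size) // in injt ltt *.
Qed.

Lemma is_config_onto (V : finType) (pi : V -> nat) p :
  is_config pi -> p < #|V| -> exists v, pi v = p.
Proof.
move=> [inj lt] hp; pose f v : 'I_#|V| := Ordinal (lt v).
have /codomP[v /(congr1 val) /= pv] : Ordinal hp \in codom f.
  by apply: inj_card_onto; rewrite ?card_ord // => x y [/inj].
by exists v.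
Qed.

Section RelationPigeonhole.
Variables (T : finType) (k : nat) (A : {set T}) (R : T -> 'I_k -> bool).
Hypothesis R_total : forall x, x \in A -> exists j, R x j.
Hypothesis R_inj : forall x y j, x \in A -> y \in A -> R x j -> R y j -> x = y.

Let pickR x := [pick j | R x j].

Let pickRP x : x \in A -> exists2 j, pickR x = Some j & R x j.
Proof.
move=> xA; rewrite /pickR; case: pickP => [j hj|none]; first by exists j.
by have [j] := R_total xA; rewrite none.
Qed.

Let pickR_inj : {in A &, injective pickR}.
Proof.
move=> x y xA yA; have [j -> Rxj] := pickRP xA; have [j' -> Ryj'] := pickRP yA.
by case=> jj'; rewrite -jj' in Ryj'; apply: R_inj Rxj Ryj'.
Qed.

Let pickR_sub : pickR @: A \subset Some @: [set: 'I_k].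
Proof.
apply/subsetP => _ /imsetP[x xA ->]; have [j -> _] := pickRP xA.
exact: imset_f.
Qed.

Let card_Some : #|Some @: [set: 'I_k]| = k.
Proof. by rewrite card_imset ?cardsT ?card_ord // => ? ? []. Qed.

Lemma leq_card_rel : #|A| <= k.
Proof.
by rewrite -(card_in_imset pickR_inj); apply: leq_trans (subset_leq_card pickR_sub) _;
  rewrite card_Some.
Qed.

Lemma card_rel_eq : #|A| = k ->
  (forall j, exists2 x, x \in A & R x j) /\
  (forall x j j', x \in A -> R x j -> R x j' -> j = j').
Proof.
move=> cardA.
have imA : pickR @: A = Some @: [set: 'I_k].
  by apply/eqP; rewrite eqEcard pickR_sub card_Some (card_in_imset pickR_inj) cardA /=.
have onto j : exists2 x, x \in A & pickR x = Some j.
  have /imsetP[x xA eqx] : Some j \in pickR @: A by rewrite imA imset_f.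
  by exists x.
have pickR_R x j : pickR x = Some j -> R x j.
  by rewrite /pickR; case: pickP => [j' Rxj' [<-] | //].
split=> [j | x j j' xA Rxj Rxj'].
  by have [x xA /pickR_R] := onto j; exists x.
have [y yA eqy] := onto j; have [y' yA' eqy'] := onto j'.
move: (R_inj xA yA Rxj (pickR_R _ _ eqy)) (R_inj xA yA' Rxj' (pickR_R _ _ eqy')).
by move=> ey ey'; subst y y'; rewrite eqy in eqy'; case: eqy'.
Qed.

End RelationPigeonhole.

Definition layer_vertices (V : Type) (I : seq (V * V)) : seq V :=
  flatten [seq [:: p.1; p.2] | p <- I].

Definition interacts (V : eqType) (I : seq (V * V)) (v x : V) : bool :=
  ((v, x) \in I) || ((x, v) \in I).

Lemma interactsC (V : eqType) (I : seq (V * V)) v x :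
  interacts I v x = interacts I x v.
Proof. by rewrite /interacts orbC. Qed.

Lemma interacts_vertex (V : eqType) (I : seq (V * V)) v x :
  interacts I v x -> v \in layer_vertices I.
Proof.
by case/orP=> hI; apply/flatten_mapP; [exists (v, x) | exists (x, v)];
  rewrite // !inE eqxx ?orbT.
Qed.

Lemma size_layer_vertices (V : Type) (I : seq (V * V)) :
  size (layer_vertices I) = (size I).*2.
Proof. by elim: I => //= p I IH; rewrite IH doubleS. Qed.

Lemma interacts_partner_uniq (V : eqType) (I : seq (V * V)) v x y :
  uniq (layer_vertices I) -> interacts I v x -> interacts I v y -> x = y.
Proof.
elim: I => [//|[a b] I IH] /=; rewrite -/(layer_vertices I) !inE negb_or.
case/and3P=> /andP[ab aI] bI uI.
have notin w z : w \notin layer_vertices I -> ((w, z) \in I) = false /\ ((z, w) \in I) = false.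
  move=> wI; split; apply/negP=> wzI; case/negP: wI;
  by apply: (@interacts_vertex _ _ _ z); rewrite /interacts wzI ?orbT.
rewrite /interacts !in_cons !xpair_eqE.
case: (v =P a) => [->|_]; last case: (v =P b) => [->|_].
- have [-> ->] := notin a x aI; have [-> ->] := notin a y aI.
  by rewrite (negbTE ab) /= !andbF !orbF => /eqP-> /eqP->.
- have [-> ->] := notin b x bI; have [-> ->] := notin b y bI.
  by rewrite /= !andbT !orbF => /eqP-> /eqP->.
- by rewrite /= !andbF /=; apply: IH.
Qed.

Lemma uniq_layer_vertices (V : eqType) (I : seq (V * V)) :
  uniq I -> {in I, forall p, p.1 != p.2} ->
  {in I &, forall p q w, w \in [:: p.1; p.2] -> w \in [:: q.1; q.2] -> p = q} ->
  uniq (layer_vertices I).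
Proof.
elim: I => [//|p I IH] /= /andP[pI uI] diff share.
rewrite -/(layer_vertices I) !inE negb_or diff ?mem_head //=.
have out w : w \in [:: p.1; p.2] -> w \notin layer_vertices I.
  move=> wp; apply/flatten_mapP=> -[q qI wq].
  have qpI : q \in p :: I by rewrite inE qI orbT.
  by move: pI; rewrite (share p q (mem_head _ _) qpI w wp wq) qI.
rewrite !out ?inE ?eqxx ?orbT //=.
by apply: IH => // [q qI | q r qI rI]; [apply: diff | apply: share]; rewrite inE ?qI ?rI orbT.
Qed.

Definition layer_time (V : Type) (N : swap_network V) (j : nat) : nat :=
  (nth (0, [::]) (sn_inter N) j).1.
Definition layer_edges (V : Type) (N : swap_network V) (j : nat) : seq (V * V) :=
  (nth (0, [::]) (sn_inter N) j).2.

Section LowerBounds.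
Variables (n : nat) (N : swap_network 'I_n).
Hypothesis HN : is_swap_network (@K_edge n) N.
Local Notation k := (interaction_depth N).
Local Notation d := (swap_depth N).
Local Notation pi := (config_at (sn_init N) (sn_swaps N)).

Lemma is_config_net t : is_config (pi t).
Proof. by case: HN => [init [swaps _]]; apply: is_config_at. Qed.

Lemma net_inj t : injective (pi t).
Proof. by case: (is_config_net t). Qed.

Lemma net_lt t v : pi t v < n.
Proof. by case: (is_config_net t) => _ /(_ v); rewrite card_ord. Qed.

Lemma net_onto t p : p < n -> exists v, pi t v = p.
Proof. by move=> lt_pn; apply: is_config_onto (is_config_net t) _; rewrite card_ord. Qed.

Lemma net_step t v : t < d ->
  pi t.+1 v = swap_pos (nth [::] (sn_swaps N) t) (pi t v).
Proof. by move=> lt_td; rewrite config_atS. Qed.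

Lemma swap_layer_valid t : t < d -> valid_swap_layer n (nth [::] (sn_swaps N) t).
Proof.
by case: HN => [_ [swaps _]] lt_td; have := swaps _ (mem_nth [::] lt_td); rewrite card_ord.
Qed.

Lemma layer_valid j : j < k ->
  layer_time N j <= d /\
  valid_interaction_layer (@K_edge n) (pi (layer_time N j)) (layer_edges N j).
Proof. by case: HN => [_ [_ [layers _]]] lt_jk; apply/layers/mem_nth. Qed.

Lemma uniq_layer j : j < k -> uniq (layer_vertices (layer_edges N j)).
Proof. by case/layer_valid=> _ []. Qed.

Lemma layer_adjacent j v x : j < k -> interacts (layer_edges N j) v x ->
  let p := pi (layer_time N j) in p v = (p x).+1 \/ p x = (p v).+1.
Proof.
case/layer_valid=> _ [edges _] /orP[] /edges[_ /=] []; tauto.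
Qed.

Lemma layer_interacts_neq j v x : j < k -> interacts (layer_edges N j) v x -> x != v.
Proof.
by case/layer_valid=> _ [edges _] /orP[] /edges[] //; rewrite /K_edge eq_sym.
Qed.

Lemma edge_in_layer v x : v != x -> exists2 j, j < k & interacts (layer_edges N j) v x.
Proof.
case: HN => [_ [_ [_ cover]]] /cover[tI tIin vx].
exists (index tI (sn_inter N)); first by rewrite /interaction_depth index_mem.
by rewrite /layer_edges nth_index.
Qed.

Section Vertex.
Variable v : 'I_n.

Let meets x (j : 'I_k) := interacts (layer_edges N j) v x.

Let meets_total x : x \in [set~ v] -> exists j, meets x j.
Proof.
rewrite !inE eq_sym => vx; have [j lt_jk vxj] := edge_in_layer vx.
by exists (Ordinal lt_jk).
Qed.

Let meets_inj x y j : x \in [set~ v] -> y \in [set~ v] -> meets x j -> meets y j -> x = y.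
Proof. by move=> _ _; apply/interacts_partner_uniq/uniq_layer. Qed.

Let card_others : #|[set~ v]| = n.-1.
Proof. by rewrite cardsC1 card_ord. Qed.

Lemma leq_pred_interaction_depth : n.-1 <= k.
Proof. by rewrite -card_others; apply: leq_card_rel meets_total meets_inj. Qed.

Hypothesis tight : k = n.-1.

Lemma tight_layer_meets j : j < k -> exists x, interacts (layer_edges N j) v x.
Proof.
have [onto _] := card_rel_eq meets_total meets_inj (etrans card_others (esym tight)).
by move=> lt_jk; have [x _ vxj] := onto (Ordinal lt_jk); exists x.
Qed.

Lemma tight_edge_layer_uniq x j j' : j < k -> j' < k ->
  interacts (layer_edges N j) v x -> interacts (layer_edges N j') v x -> j = j'.
Proof.
have [_ func] := card_rel_eq meets_total meets_inj (etrans card_others (esym tight)).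
move=> lt_jk lt_j'k vxj vxj'.
have xv : x \in [set~ v] by rewrite !inE (layer_interacts_neq lt_jk vxj).
by have /(congr1 val) := func x (Ordinal lt_jk) (Ordinal lt_j'k) xv vxj vxj'.
Qed.

End Vertex.

Lemma odd_leq_interaction_depth : 1 < n -> odd n -> n <= k.
Proof.
move=> n_gt1 odd_n; have v : 'I_n := Ordinal (ltnW n_gt1).
have := leq_pred_interaction_depth v; rewrite leq_eqVlt => /orP[/eqP tight|]; last by lia.
have lt_0k : 0 < k by lia.
have all_met w : w \in layer_vertices (layer_edges N 0).
  by have [x /interacts_vertex] := tight_layer_meets w (esym tight) lt_0k.
have /card_uniqP := uniq_layer lt_0k.
rewrite size_layer_vertices (eq_card all_met) card_ord => n_double.
by rewrite n_double odd_double in odd_n.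
Qed.

Lemma swapped_before a x t : t <= d -> pi 0 a < pi 0 x -> pi t x < pi t a ->
  exists2 s, s < t & pi s x = (pi s a).+1.
Proof.
elim: t => [|t IH] le_td a_x0; first lia.
move=> x_a; have [x_a' | a_x] := ltnP (pi t x) (pi t a).
  by have [s lt_st] := IH (ltnW le_td) a_x0 x_a'; exists s => //; apply: ltnW.
exists t => //; rewrite !net_step // in x_a.
have := swap_pos_bounds (nth [::] (sn_swaps N) t) (pi t x).
have := swap_pos_bounds (nth [::] (sn_swaps N) t) (pi t a).
have : pi t x != pi t a by apply/eqP=> /net_inj xa; subst x; lia.
lia.
Qed.

Lemma leq_swap_depth : n - 2 <= d.
Proof.
have [n0 | n_gt0] := posnP n; first lia.
have [a a0] := net_onto 0 n_gt0.
pose right_of x (s : 'I_d.+1) := pi s x == (pi s a).+1.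
have right_total x : x \in [set~ a] -> exists s, right_of x s.
  rewrite !inE eq_sym => ax; have [j lt_jk axj] := edge_in_layer ax.
  have [le_td _] := layer_valid lt_jk.
  case: (layer_adjacent lt_jk axj) => [a_x | x_a].
    have a_x0 : pi 0 a < pi 0 x.
      rewrite a0 lt0n; apply: contra ax => /eqP x0.
      by apply/eqP/(@net_inj 0); rewrite a0 x0.
    have x_left : pi (layer_time N j) x < pi (layer_time N j) a by rewrite a_x.
    have [s lt_st x_right] := swapped_before le_td a_x0 x_left.
    by exists (Ordinal (ltnW (leq_trans lt_st le_td) : s < d.+1)); apply/eqP.
  by exists (Ordinal (le_td : layer_time N j < d.+1)); apply/eqP.
have right_inj x y (s : 'I_d.+1) : x \in [set~ a] -> y \in [set~ a] ->
    right_of x s -> right_of y s -> x = y.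
  by move=> _ _ /eqP xs /eqP ys; apply: (@net_inj s); rewrite xs ys.
by have := leq_card_rel right_total right_inj; rewrite cardsC1 card_ord; lia.
Qed.

Definition only_neighbour (n e f : nat) : Prop :=
  forall p, p < n -> p.+1 = e \/ p = e.+1 -> p = f.

Section Tight.
Hypotheses (n_gt2 : 2 < n) (dE : d = n - 2) (kE : k = n - 1).

Let tight : k = n.-1. Proof. by rewrite kE subn1. Qed.

Lemma end_partner e f j v : only_neighbour n e f -> j < k ->
  pi (layer_time N j) v = e ->
  exists x, interacts (layer_edges N j) v x /\ pi (layer_time N j) x = f.
Proof.
move=> e_f lt_jk ve; have [x vx] := tight_layer_meets v tight lt_jk.
exists x; split=> //; apply: e_f; first exact: net_lt.
by case: (layer_adjacent lt_jk vx); rewrite ve; [left | right].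
Qed.

Lemma layer_time_inj j j' : j < k -> j' < k ->
  layer_time N j = layer_time N j' -> j = j'.
Proof.
move=> lt_jk lt_j'k tt'; have [c c0] := net_onto (layer_time N j) (ltnW (ltnW n_gt2)).
have end0 : only_neighbour n 0 1 by move=> p _; lia.
have [x [cx x1]] := end_partner end0 lt_jk c0.
rewrite tt' in c0 x1; have [x' [cx' x'1]] := end_partner end0 lt_j'k c0.
have xx' : x = x' by apply: (@net_inj (layer_time N j')); rewrite x1 x'1.
by subst x'; exact: (tight_edge_layer_uniq tight lt_jk lt_j'k cx cx').
Qed.

Lemma layer_time_onto t : t <= d -> exists2 j, j < k & layer_time N j = t.
Proof.
move=> le_td.
pose time (j : 'I_k) : 'I_d.+1 :=
  Ordinal (proj1 (layer_valid (ltn_ord j)) : layer_time N j < d.+1).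
have time_inj : injective time.
  by move=> j j' [/layer_time_inj tt']; apply/val_inj/tt'.
have /codomP[j [tj]] : Ordinal (le_td : t < d.+1) \in codom time.
  by apply: inj_card_onto; rewrite // !card_ord tight dE; lia.
by exists j.
Qed.

Lemma end_not_exchanged e f t v w : only_neighbour n e f -> t < d ->
  pi t v = e -> pi t w = f -> pi t.+1 v = f -> pi t.+1 w = e -> False.
Proof.
move=> e_f lt_td ve wf vf' we'.
have [j lt_jk jt] := layer_time_onto (ltnW lt_td).
have [j' lt_j'k j't] := layer_time_onto lt_td.
rewrite -jt in ve wf; rewrite -j't in vf' we'.
have [x [vx xf]] := end_partner e_f lt_jk ve.
have [y [wy yf]] := end_partner e_f lt_j'k we'.
have xw : x = w by apply: (@net_inj (layer_time N j)); rewrite xf wf.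
have yv : y = v by apply: (@net_inj (layer_time N j')); rewrite yf vf'.
subst x y; rewrite interactsC in wy.
have jj' := tight_edge_layer_uniq tight lt_jk lt_j'k vx wy.
by subst j'; lia.
Qed.

Lemma first_pos_fixed v t : t <= d -> pi 0 v = 0 -> pi t v = 0.
Proof.
move=> + v0; elim: t => [//|t IH] lt_td; have vt := IH (ltnW lt_td).
have [inL disj] := swap_layer_valid lt_td.
rewrite net_step // vt /swap_pos /=; case: ifP => // L0; exfalso.
have [w w1] := net_onto t (ltnW n_gt2).
have L1 : (1 \in nth [::] (sn_swaps N) t) = false.
  by apply/negP=> L1; have := disj _ _ L0 L1 isT; lia.
apply: (@end_not_exchanged 0 1 t v w) => //; first by move=> p _; lia.
- by rewrite net_step // vt /swap_pos L0.
- by rewrite net_step // w1 /swap_pos L1 L0.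
Qed.

Lemma last_pos_fixed v t : t <= d -> pi 0 v = n.-1 -> pi t v = n.-1.
Proof.
move=> + v0; elim: t => [//|t IH] lt_td; have vt := IH (ltnW lt_td).
have [inL disj] := swap_layer_valid lt_td.
have Ln1 : (n.-1 \in nth [::] (sn_swaps N) t) = false.
  by apply/negP=> /inL; lia.
have n1_gt0 : 0 < n.-1 by lia.
rewrite net_step // vt /swap_pos Ln1 n1_gt0 /=; case: ifP => // Ln2; exfalso.
have lt_n2n : n.-2 < n by lia.
have [w w2] := net_onto t lt_n2n.
apply: (@end_not_exchanged n.-1 n.-2 t v w) => //; first by move=> p; lia.
- by rewrite net_step // vt /swap_pos Ln1 n1_gt0 Ln2.
- by rewrite net_step // w2 /swap_pos Ln2; lia.
Qed.

Lemma tight_network_absurd : False.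
Proof.
have [a a0] := net_onto 0 (ltnW (ltnW n_gt2)).
have lt_n1n : n.-1 < n by lia.
have [b b0] := net_onto 0 lt_n1n.
have ab : a != b by apply/eqP=> eq_ab; move: b0; rewrite -eq_ab a0; lia.
have [j lt_jk abj] := edge_in_layer ab; have [le_td _] := layer_valid lt_jk.
have := layer_adjacent lt_jk abj.
by rewrite /= (first_pos_fixed le_td a0) (last_pos_fixed le_td b0); lia.
Qed.

End Tight.
End LowerBounds.

(* Position at time t of vertex k in the odd-even transposition network on m
   positions: (2k + t) mod 2m, folded back onto [0, m). *)
Definition oddeven_pos (m k t : nat) : nat :=
  let r := if k.*2 + t < m.*2 then k.*2 + t else k.*2 + t - m.*2 in
  if r < m then r else m.*2 - 1 - r.

Definition oddeven_layer (s m t : nat) : seq nat :=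
  [seq x <- iota s m.-1 | (x - s) %% 2 == t %% 2].

(* [m %| x] for 0 < x < 4m, in a form that lia understands. *)
Definition small_multiple (m x : nat) : bool := [|| x == m, x == m.*2 | x == m * 3].

Ltac case_ifs :=
  repeat match goal with |- context [if ?c then _ else _] =>
    lazymatch c with context [if _ then _ else _] => fail | _ =>
      let E := fresh "E" in case E: c => /= end end.

Ltac oddeven_arith := rewrite /oddeven_pos /small_multiple /=; case_ifs; lia.

Lemma oddeven_pos_lt m k t : k < m -> t < m.*2 -> oddeven_pos m k t < m.
Proof. by move=> *; oddeven_arith. Qed.

Lemma oddeven_pos0_inj m k l : k < m -> l < m ->
  oddeven_pos m k 0 = oddeven_pos m l 0 -> k = l.
Proof. by move=> lt_km lt_lm; oddeven_arith. Qed.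

Definition oddeven_move (m t p : nat) : nat :=
  if (p.+1 < m) && (p %% 2 == t %% 2) then p.+1
  else if (0 < p) && (p.-1 %% 2 == t %% 2) then p.-1 else p.

Lemma swap_pos_oddeven_layer s m t p : p < m ->
  swap_pos (oddeven_layer s m t) (s + p) = s + oddeven_move m t p.
Proof.
by move=> lt_pm; rewrite /swap_pos /oddeven_move !mem_filter !mem_iota; case_ifs; lia.
Qed.

Lemma oddeven_move_pos m k t : k < m -> t.+1 < m.*2 ->
  oddeven_move m t (oddeven_pos m k t) = oddeven_pos m k t.+1.
Proof. by move=> lt_km lt_tm; rewrite /oddeven_move; oddeven_arith. Qed.

(* The pairs with k + l + t = 0 (mod m) are those exchanged by swap layer t - 1,
   the pairs with k + l + t + 1 = 0 (mod m) those exchanged by swap layer t. *)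
Lemma oddeven_pos_adjacent m k l t : k < m -> l < m -> k != l -> t < m.*2 ->
  small_multiple m (k + l + t) ->
  oddeven_pos m k t = (oddeven_pos m l t).+1 \/ oddeven_pos m l t = (oddeven_pos m k t).+1.
Proof. by move=> lt_km lt_lm neq_kl lt_t; oddeven_arith. Qed.

Lemma oddeven_pos_adjacent_next m k l t : k < m -> l < m -> k != l -> t < m.*2 ->
  small_multiple m (k + l + t).+1 ->
  oddeven_pos m k t = (oddeven_pos m l t).+1 \/ oddeven_pos m l t = (oddeven_pos m k t).+1.
Proof. by move=> lt_km lt_lm neq_kl lt_t; oddeven_arith. Qed.

Lemma oddeven_pos_eq0 m k t : k < m -> t < m.*2 ->
  (k.*2 + t == 0) || (k.*2 + t == m.*2) -> oddeven_pos m k t = 0.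
Proof. by move=> lt_km lt_t; oddeven_arith. Qed.

Definition matching_layer (n : nat) (M : rel 'I_n) : seq ('I_n * 'I_n) :=
  enum [set p | M p.1 p.2].

Lemma matching_layer_valid n (pi : 'I_n -> nat) (M : rel 'I_n) :
  (forall u v, M u v -> u < v) ->
  (forall u v, M u v -> pi u = (pi v).+1 \/ pi v = (pi u).+1) ->
  (forall w x y, M w x || M x w -> M w y || M y w -> x = y) ->
  valid_interaction_layer (@K_edge n) pi (matching_layer M).
Proof.
move=> lt_M adj_M partner; split.
  move=> [u v]; rewrite mem_enum inE /= => Muv; split; last exact: adj_M.
  by rewrite /K_edge neq_ltn lt_M.
apply: uniq_layer_vertices; first exact: enum_uniq.
  by move=> [u v]; rewrite mem_enum inE /= => /lt_M; rewrite neq_ltn => ->.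
move=> [u v] [u' v']; rewrite !mem_enum !inE /= => Muv Mu'v' w.
have := lt_M _ _ Muv; have := lt_M _ _ Mu'v'.
rewrite !inE => lt_uv' lt_uv /orP[]/eqP-> /orP[]/eqP e.
- by subst u'; rewrite (partner u v v') ?Muv ?Mu'v'.
- by subst v'; move: lt_uv'; rewrite -(partner u v u') ?Muv ?Mu'v' ?orbT //; lia.
- by subst u'; move: lt_uv'; rewrite -(partner v u v') ?Muv ?Mu'v' ?orbT //; lia.
- by subst v'; rewrite (partner v u u') ?Muv ?Mu'v' ?orbT.
Qed.

Definition oddeven_net_pos (s m v t : nat) : nat :=
  if v < m then s + oddeven_pos m v t else 0.

Definition oddeven_net n s m D (I : seq (nat * seq ('I_n * 'I_n))) : swap_network 'I_n :=
  SwapNetwork (fun v : 'I_n => oddeven_net_pos s m v 0)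
    [seq oddeven_layer s m t | t <- iota 0 D] I.

Section OddEvenNet.
Variables (n s m D : nat) (I : seq (nat * seq ('I_n * 'I_n))).
Hypotheses (nE : n = s + m) (s_le1 : s <= 1) (D_lt : D < m.*2).

Local Notation N := (oddeven_net s m D I).

Lemma config_at_oddeven_net t (v : 'I_n) : t <= D ->
  config_at (sn_init N) (sn_swaps N) t v = oddeven_net_pos s m v t.
Proof.
elim: t => [|t IH] le_tD; first by rewrite config_at0.
rewrite config_atS ?size_map ?size_iota // /apply_layer IH ?(ltnW le_tD) //.
rewrite (nth_map 0) ?size_iota // nth_iota // /oddeven_net_pos.
case: ifP => lt_vm.
  by rewrite swap_pos_oddeven_layer ?oddeven_move_pos ?oddeven_pos_lt //; lia.
by rewrite /swap_pos mem_filter mem_iota; have := ltn_ord v; case: ifP; lia.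
Qed.

Lemma oddeven_net_ok :
  (forall tI, tI \in I -> tI.1 <= D /\
     valid_interaction_layer (@K_edge n) (fun v : 'I_n => oddeven_net_pos s m v tI.1) tI.2) ->
  (forall u v : 'I_n, u < v -> exists2 tI, tI \in I & (u, v) \in tI.2) ->
  is_swap_network (@K_edge n) N.
Proof.
move=> layers_ok cover; split; [|split; [|split]].
- split=> [u v /= | v /=]; rewrite ?card_ord /oddeven_net_pos; last first.
    by case: ifP => lt_vm; [have := @oddeven_pos_lt m v 0 | ]; lia.
  move=> uv; apply: ord_inj; move: uv; have := ltn_ord u; have := ltn_ord v.
  case: ifP => lt_um; case: ifP => lt_vm; try lia.
  by move=> _ _ /addnI /oddeven_pos0_inj; apply.
- move=> L /mapP[t _ ->]; rewrite card_ord; split=> [i | i j].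
    by rewrite mem_filter mem_iota; lia.
  by rewrite !mem_filter !mem_iota; lia.
- move=> tI tI_in; have [le_tD [edges U]] := layers_ok _ tI_in.
  split; first by rewrite size_map size_iota.
  split=> // p p_in; rewrite !config_at_oddeven_net //; exact: edges.
- move=> u v; rewrite /K_edge neq_ltn => /orP[] /cover[tI tI_in uv];
  by exists tI; rewrite // /interacts uv ?orbT.
Qed.

End OddEvenNet.

Definition kn_class n c (u v : 'I_n) : bool := (u < v) && small_multiple n (u + v + c).

Definition kn_layers n : seq (nat * seq ('I_n * 'I_n)) :=
  [seq (c.-1, matching_layer (@kn_class n c)) | c <- iota 0 n].

Definition kn_net n : swap_network 'I_n := oddeven_net 0 n (n - 2) (kn_layers n).

Lemma kn_net_ok n : 1 < n -> is_swap_network (@K_edge n) (kn_net n).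
Proof.
move=> n_gt1; apply: oddeven_net_ok => //; first lia.
- move=> tI /mapP[c]; rewrite mem_iota => /andP[_ lt_cn] ->; split=> /=; first lia.
  apply: matching_layer_valid => [u v /andP[] // | u v /andP[lt_uv] | w x y].
  + rewrite /oddeven_net_pos !ltn_ord /=; have := ltn_ord u; have := ltn_ord v.
    case: c lt_cn => [|c] lt_cn Muv lt_un lt_vn.
      by apply: oddeven_pos_adjacent; rewrite ?neq_ltn ?lt_uv //; lia.
    by apply: oddeven_pos_adjacent_next; rewrite ?neq_ltn ?lt_uv -?addnS //; lia.
  + move=> wx wy; apply: ord_inj; move: wx wy; rewrite /kn_class /small_multiple.
    by have := ltn_ord w; have := ltn_ord x; have := ltn_ord y; lia.
- move=> u v lt_uv; have := ltn_ord u; have := ltn_ord v => lt_vn lt_un.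
  pose c := if u + v <= n then n - (u + v) else n.*2 - (u + v).
  exists (c.-1, matching_layer (kn_class c)).
    by apply: map_f; rewrite mem_iota /c; case: ifP; lia.
  by rewrite mem_enum inE /= /kn_class lt_uv /small_multiple /c; case: ifP; lia.
Qed.

Lemma kn_net_swap_depth n : swap_depth (kn_net n) = n - 2.
Proof. by rewrite /swap_depth size_map size_iota. Qed.

Lemma kn_net_interaction_depth n : interaction_depth (kn_net n) = n.
Proof. by rewrite /interaction_depth size_map size_iota. Qed.

(* The parked vertex n - 1 meets the vertex at position 1, i.e. the u with
   2u + t = 0 (mod 2(n - 1)). *)
Definition kn_even_class n t (u v : 'I_n) : bool :=
  (u < v) && if v == n.-1 :> nat then (u.*2 + t == 0) || (u.*2 + t == (n.-1).*2)
             else small_multiple n.-1 (u + v + t).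

Definition kn_even_layers n : seq (nat * seq ('I_n * 'I_n)) :=
  [seq (j.*2, matching_layer (@kn_even_class n j.*2)) | j <- iota 0 n.-1].

Definition kn_even_net n : swap_network 'I_n :=
  oddeven_net 1 n.-1 ((n.-1).*2 - 2) (kn_even_layers n).

Lemma small_multiple_even_shift m x : odd m -> 0 < x < m.*2 ->
  exists2 j, j < m & small_multiple m (x + j.*2).
Proof.
move=> odd_m /andP[x_gt0 lt_xm]; rewrite /small_multiple.
have := odd_double_half m; have := odd_double_half x; rewrite odd_m.
case: (odd x) => /= xE mE.
  case: (leqP x m) => le_xm.
    by exists (m./2 - x./2); lia.
  by exists (m./2 * 3 + 1 - x./2); lia.
by exists (m./2.*2 + 1 - x./2); lia.
Qed.

Lemma kn_even_net_ok n : 2 < n -> ~~ odd n -> is_swap_network (@K_edge n) (kn_even_net n).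
Proof.
move=> n_gt2 even_n; apply: oddeven_net_ok => //; try lia.
- move=> tI /mapP[j]; rewrite mem_iota => /andP[_ lt_jm] ->; split=> /=; first lia.
  apply: matching_layer_valid => [u v /andP[] // | u v /andP[lt_uv] | w x y].
  + have := ltn_ord u; have := ltn_ord v; rewrite /oddeven_net_pos.
    case: eqP => [v_m | /eqP v_m] Muv lt_vn lt_un.
      by rewrite v_m ltnn (_ : u < n.-1) ?oddeven_pos_eq0 //; lia.
    have [lt_um lt_vm] : u < n.-1 /\ v < n.-1 by lia.
    rewrite lt_um lt_vm; have := @oddeven_pos_adjacent n.-1 u v j.*2 lt_um lt_vm.
    by rewrite neq_ltn lt_uv; lia.
  + move=> wx wy; apply: ord_inj; move: wx wy; rewrite /kn_even_class /small_multiple.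
    by have := ltn_ord w; have := ltn_ord x; have := ltn_ord y; case_ifs; lia.
- move=> u v lt_uv; have := ltn_ord u; have := ltn_ord v => lt_vn lt_un.
  have [j lt_jm Mj] : exists2 j, j < n.-1 & kn_even_class j.*2 u v.
    rewrite /kn_even_class lt_uv /=; case: eqP => [v_m | /eqP v_m].
      by exists (if u == 0 :> nat then 0 else n.-1 - u); case: ifP; lia.
    by apply: small_multiple_even_shift; lia.
  exists (j.*2, matching_layer (kn_even_class j.*2)); last by rewrite mem_enum inE.
  by apply: map_f; rewrite mem_iota.
Qed.

Lemma kn_even_net_interaction_depth n : interaction_depth (kn_even_net n) = n - 1.
Proof. by rewrite /interaction_depth size_map size_iota subn1. Qed.

Theorem lemma1 (n : nat) (hn : 2 <= n) :
  (* (i) *)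
  (dswap_is (@K_edge n) (n - 2) /\
   exists N : swap_network 'I_n, is_swap_network (@K_edge n) N /\
     swap_depth N = n - 2 /\ interaction_depth N = n) /\
  (* (ii) *)
  (odd n -> forall N : swap_network 'I_n, is_swap_network (@K_edge n) N ->
     n <= interaction_depth N) /\
  (* (iii) *)
  (~~ odd n -> 2 < n ->
     ((exists N : swap_network 'I_n, is_swap_network (@K_edge n) N /\
         interaction_depth N = n - 1) /\
      (forall N : swap_network 'I_n, is_swap_network (@K_edge n) N ->
         n - 1 <= interaction_depth N)) /\
     (forall N : swap_network 'I_n, is_swap_network (@K_edge n) N ->
        ~ (swap_depth N = n - 2 /\ interaction_depth N = n - 1))).
Proof.
have n_gt0 : 0 < n by lia.
split; [split; [split|] | split].
- by exists (kn_net n); split; [exact: kn_net_ok | exact: kn_net_swap_depth].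
- by move=> N HN; exact: leq_swap_depth.
- exists (kn_net n); split; first exact: kn_net_ok.
  by split; [exact: kn_net_swap_depth | exact: kn_net_interaction_depth].
- by move=> odd_n N HN; exact: odd_leq_interaction_depth.
move=> even_n n_gt2; split; first split.
- exists (kn_even_net n); split; [exact: kn_even_net_ok | exact: kn_even_net_interaction_depth].
- by move=> N HN; rewrite subn1; exact: (leq_pred_interaction_depth HN (Ordinal n_gt0)).
- by move=> N HN [dE kE]; exact: (tight_network_absurd HN n_gt2 dE kE).
Qed.
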